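(* Let $\mathfrak S=(S,\xrightarrow{F},\le)$ be a functional WSTS. Then its completion $\widehat{\mathfrak S}$ is a (complete, functional) WSTS if and only if $(S,\le)$ is $\omega^2$-wqo.
   Context: A functional WSTS $(S,\xrightarrow{F},\le)$: $(S,\le)$ is a well partial order (well-founded, no infinite antichain), and $F$ is a finite set of partial monotonic maps $f:S\rightharpoonup S$ (domain upward-closed, $f$ monotone on its domain); transitions are $s\to f(s)$. A WSTS is a monotonic ordered transition system whose order is a well (quasi-)order; a complete functional WSTS is one whose state space is a continuous dcpo which is well-ordered, with partial continuous maps (Scott-open domain, preserving lubs of directed subsets of the domain). Completion: an ideal of $S$ is a nonempty downward-closed directed subset; $\widehat S=\mathrm{Idl}(S)$ ordered by inclusion; for $f\in F$, $\widehat f$ has domain $\{C\in\widehat S\mid C\cap\operatorname{dom}f\neq\emptyset\}$ and $\widehat f(C)=\downarrow f\langle C\cap\operatorname{dom} f\rangle$; $\widehat{\mathfrak S}=(\widehat S,\xrightarrow{\{\widehat f\mid f\in F\}},\subseteq)$. Rado's structure: $X_{\mathrm{Rado}}=\{(m,n)\in\mathbb N^2\mid m<n\}$ with $(m,n)\le(m',n')$ iff ($m=m'$ and $n\le n'$) or $n<m'$. A wqo is $\omega^2$-wqo if it contains no subset order-isomorphic (with the induced order) to $X_{\mathrm{Rado}}$. *)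

(* Sets are predicates [T -> Prop]; partial maps are [T -> option T]. *)
From Stdlib Require Import List Classical ClassicalEpsilon.
Import ListNotations.

Set Implicit Arguments.

Section Orders.
Variable T : Type.
Variable le : T -> T -> Prop.

Definition partial_order : Prop :=
  (forall x, le x x) /\
  (forall x y z, le x y -> le y z -> le x z) /\
  (forall x y, le x y -> le y x -> x = y).

Definition wf_order : Prop := well_founded (fun x y => le x y /\ ~ le y x).

Definition no_infinite_antichain : Prop :=
  ~ exists a : nat -> T, forall i j, i <> j -> ~ le (a i) (a j).

Definition wpo : Prop := partial_order /\ wf_order /\ no_infinite_antichain.

Definition pdom (f : T -> option T) (x : T) : Prop := f x <> None.

Definition upward_closed (U : T -> Prop) : Prop :=
  forall x y, le x y -> U x -> U y.

Definition partial_monotone (f : T -> option T) : Prop :=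
  upward_closed (pdom f) /\
  forall x y x' y', le x y -> f x = Some x' -> f y = Some y' -> le x' y'.

Definition functional_WSTS (F : list (T -> option T)) : Prop :=
  wpo /\ forall f, In f F -> partial_monotone f.

Definition directed (D : T -> Prop) : Prop :=
  (exists x, D x) /\
  forall x y, D x -> D y -> exists z, D z /\ le x z /\ le y z.

Definition is_lub (D : T -> Prop) (s : T) : Prop :=
  (forall y, D y -> le y s) /\ (forall u, (forall y, D y -> le y u) -> le s u).

Definition dcpo : Prop :=
  partial_order /\ forall D, directed D -> exists s, is_lub D s.

Definition way_below (x y : T) : Prop :=
  forall D s, directed D -> is_lub D s -> le y s -> exists d, D d /\ le x d.

Definition continuous_dcpo : Prop :=
  dcpo /\ forall x, directed (fun y => way_below y x) /\ is_lub (fun y => way_below y x) x.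

Definition scott_open (U : T -> Prop) : Prop :=
  upward_closed U /\
  forall D s, directed D -> is_lub D s -> U s -> exists d, D d /\ U d.

Definition partial_continuous (g : T -> option T) : Prop :=
  scott_open (pdom g) /\
  forall D s, directed D -> (forall d, D d -> pdom g d) -> is_lub D s ->
    exists gs, g s = Some gs /\ is_lub (fun y => exists d, D d /\ g d = Some y) gs.

Definition complete_functional_WSTS (G : list (T -> option T)) : Prop :=
  functional_WSTS G /\ continuous_dcpo /\ forall g, In g G -> partial_continuous g.

End Orders.

Definition rado_le (p q : nat * nat) : Prop :=
  (fst p = fst q /\ snd p <= snd q) \/ snd p < fst q.

(* X_Rado = {(m,n) | m < n}; an order embedding e : X_Rado -> S
   (injective, and e p <= e q <-> p <=_Rado q). *)
Definition rado_embeds (S : Type) (le : S -> S -> Prop) : Prop :=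
  exists e : nat * nat -> S,
    (forall p q, fst p < snd p -> fst q < snd q -> e p = e q -> p = q) /\
    (forall p q, fst p < snd p -> fst q < snd q -> (le (e p) (e q) <-> rado_le p q)).

Definition wqo (S : Type) (le : S -> S -> Prop) : Prop :=
  (forall x, le x x) /\ (forall x y z, le x y -> le y z -> le x z) /\
  wf_order le /\ no_infinite_antichain le.

Definition omega2_wqo (S : Type) (le : S -> S -> Prop) : Prop :=
  wqo le /\ ~ rado_embeds le.

Section Completion.
Variable S : Type.
Variable le : S -> S -> Prop.

Definition is_ideal (C : S -> Prop) : Prop :=
  (exists x, C x) /\
  (forall x y, le x y -> C y -> C x) /\
  (forall x y, C x -> C y -> exists z, C z /\ le x z /\ le y z).

Definition Idl : Type := { C : S -> Prop | is_ideal C }.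

Definition Idl_le (C D : Idl) : Prop := forall x, proj1_sig C x -> proj1_sig D x.

Definition down_image (f : S -> option S) (C : S -> Prop) : S -> Prop :=
  fun y => exists x fx, C x /\ f x = Some fx /\ le y fx.

(* hat f (C) = down f<C ∩ dom f>.  Its domain is the set of C for which this
   set is an ideal; when f is partial monotone this is exactly
   {C | C ∩ dom f <> empty} (nonemptiness of the image). *)
Definition hat_map (f : S -> option S) (C : Idl) : option Idl :=
  match excluded_middle_informative (is_ideal (down_image f (proj1_sig C))) with
  | left p => Some (exist _ (down_image f (proj1_sig C)) p)
  | right _ => None
  end.

Definition hat_maps (F : list (S -> option S)) : list (Idl -> option Idl) :=
  map hat_map F.

End Completion.

(* Ideals ordered by inclusion always form a continuous dcpo (the way-below ideals of X are
   those contained in a principal ideal generated inside X), the lifted maps are continuous,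
   and a strictly descending chain of ideals is impossible because S is a wqo. So everything
   hinges on infinite antichains of ideals. If Rado's structure embeds, its columns
   {(m, n) | n > m} generate such an antichain. Conversely, given an infinite antichain of
   ideals, Ramsey's theorem leaves either infinitely many principal ideals, which the wqo
   property makes comparable, or infinitely many non-principal ones. Each of these carries a
   strictly increasing chain e_m avoiding the ideals of smaller index, and Ramsey's theorem for
   triples makes every e_i(j) lie below the chain e_k of each later k > j; after thinning,
   (m, n) |-> e_m(n) is an embedding of Rado's structure. *)

From Stdlib Require Import List Classical ClassicalEpsilon FunctionalExtensionality PropExtensionality ProofIrrelevance Lia PeanoNat.

(** * Dependent choice and descending chains *)

Lemma dependent_choice {T : Type} (P : nat -> T -> Prop) (R : nat -> T -> T -> Prop) :
  (forall n x, P n x -> exists y, P (S n) y /\ R n x y) ->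
  forall x0, P 0 x0 -> exists f : nat -> T, f 0 = x0 /\ forall n, P n (f n) /\ R n (f n) (f (S n)).
Proof.
  intros Hstep x0 Hx0.
  destruct (choice (fun (p : nat * T) y => P (fst p) (snd p) -> P (S (fst p)) y /\ R (fst p) (snd p) y))
    as [next Hnext].
  { intros [n x]. destruct (classic (P n x)) as [Hx | Hx].
    - destruct (Hstep n x Hx) as [y Hy]. exists y. auto.
    - exists x. simpl. tauto. }
  set (f := fix f n := match n with 0 => x0 | S m => next (m, f m) end).
  assert (HP : forall n, P n (f n)) by (induction n; [exact Hx0 | exact (proj1 (Hnext (n, f n) IHn))]).
  exists f. split; [reflexivity |]. intro n. exact (conj (HP n) (proj2 (Hnext (n, f n) (HP n)))).
Qed.

Lemma well_founded_no_descending_chain {T : Type} (R : T -> T -> Prop) :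
  well_founded R <-> forall f : nat -> T, ~ (forall n, R (f (S n)) (f n)).
Proof.
  split.
  - intros Hwf f Hf.
    enough (Hacc : forall y, Acc R y -> forall f : nat -> T, f 0 = y -> ~ (forall n, R (f (S n)) (f n)))
      by exact (Hacc _ (Hwf (f 0)) f eq_refl Hf).
    intros y Hy. induction Hy as [y _ IH]. intros g <- Hg.
    exact (IH (g 1) (Hg 0) (fun n => g (S n)) eq_refl (fun n => Hg (S n))).
  - intros Hno a. apply NNPP. intro Ha.
    destruct (dependent_choice (fun _ x => ~ Acc R x) (fun _ x y => R y x)) with (x0 := a)
      as [f [_ Hf]]; [| exact Ha |].
    + intros ? x Hx. apply NNPP. intro Hn. apply Hx. constructor. intros y Hy.
      apply NNPP. intro Hny. apply Hn. eauto.
    + apply (Hno f). intro n. apply Hf.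
Qed.

(** * Infinite sets of naturals and Ramsey's theorem *)

Definition increasing (h : nat -> nat) : Prop := forall n, h n < h (S n).

Lemma increasing_lt (h : nat -> nat) : increasing h -> forall n m, n < m -> h n < h m.
Proof.
  intros Hh n m Hnm. induction Hnm as [| m _ IH].
  - apply Hh.
  - specialize (Hh m). lia.
Qed.

Lemma increasing_lt_iff (h : nat -> nat) : increasing h -> forall n m, h n < h m <-> n < m.
Proof.
  intros Hh n m. split; [| apply increasing_lt; exact Hh].
  intro Hlt. destruct (Nat.lt_ge_cases n m) as [| Hge]; [assumption |].
  destruct (proj1 (Nat.lt_eq_cases _ _) Hge) as [Hmn | ->]; [| lia].
  pose proof (increasing_lt h Hh m n Hmn). lia.
Qed.

Lemma increasing_le_iff (h : nat -> nat) : increasing h -> forall n m, h n <= h m <-> n <= m.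
Proof.
  intros Hh n m. rewrite !Nat.le_ngt, (increasing_lt_iff h Hh). reflexivity.
Qed.

Lemma increasing_inj (h : nat -> nat) : increasing h -> forall n m, h n = h m -> n = m.
Proof.
  intros Hh n m Heq. apply Nat.le_antisymm; apply (increasing_le_iff h Hh); lia.
Qed.

Lemma increasing_ge_id (h : nat -> nat) : increasing h -> forall n, n <= h n.
Proof. intros Hh n. induction n as [| n IH]; [lia | specialize (Hh n); lia]. Qed.

Lemma upward_closed_common_bound (Q : nat -> nat -> Prop) (k : nat) :
  (forall i l l', l <= l' -> Q i l -> Q i l') ->
  (forall i, i < k -> exists l, Q i l) -> exists B, forall i, i < k -> Q i B.
Proof.
  intros Hup Hex. induction k as [| k IH].
  - exists 0. lia.
  - destruct IH as [B HB]; [intros i Hi; apply Hex; lia |].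
    destruct (Hex k (Nat.lt_succ_diag_r k)) as [l Hl].
    exists (max B l). intros i Hi.
    destruct (Nat.eq_dec i k) as [-> | Hik].
    + apply (Hup k l); [lia | exact Hl].
    + apply (Hup i B); [lia | apply HB; lia].
Qed.

Definition subset {T : Type} (Y X : T -> Prop) : Prop := forall y, Y y -> X y.

Definition infinite (X : nat -> Prop) : Prop := forall N, exists n, N <= n /\ X n.

Definition above (X : nat -> Prop) (a : nat) : nat -> Prop := fun y => X y /\ a < y.

Lemma infinite_all : infinite (fun _ => True).
Proof. intro N. exists N. auto. Qed.

Lemma infinite_above {X : nat -> Prop} (a : nat) : infinite X -> infinite (above X a).
Proof.
  intros HX N. destruct (HX (max N (S a))) as [n [Hn Xn]].
  exists n. split; [lia | split; [exact Xn | lia]].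
Qed.

Lemma infinite_enum {X : nat -> Prop} :
  infinite X -> exists h, increasing h /\ forall n, X (h n).
Proof.
  intro HX. destruct (HX 0) as [x0 [_ Hx0]].
  destruct (dependent_choice (fun _ => X) (fun _ => lt)) with (x0 := x0) as [h [_ Hh]]; [| exact Hx0 |].
  - intros ? n _. destruct (HX (S n)) as [m [Hm Xm]]. exists m. split; [exact Xm | lia].
  - exists h. split; intro n; apply Hh.
Qed.

Lemma infinite_pigeonhole {X : nat -> Prop} (P : nat -> Prop) :
  infinite X -> exists Y, infinite Y /\ subset Y X /\
    ((forall y, Y y -> P y) \/ (forall y, Y y -> ~ P y)).
Proof.
  intro HX. destruct (classic (infinite (fun y => X y /\ P y))) as [HP | HP].
  - exists (fun y => X y /\ P y). split; [exact HP |]. split; [intros y []; auto |].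
    left. intros y []. auto.
  - apply not_all_ex_not in HP as [N HN].
    exists (above X N). split; [exact (infinite_above N HX) |]. split; [intros y []; auto |].
    right. intros y [Xy Hy] Py. apply HN. exists y. split; [lia | auto].
Qed.

(* Choose a_0 < a_1 < ... and infinite sets Z_0 = X, Z_(n+1) included in Z_n above a_n,
   with a_n in Z_n and the colour of a_n constant on Z_(n+1); then keep the a_n of one colour. *)
Lemma infinite_diagonal (H1 H2 : nat -> (nat -> Prop) -> Prop) :
  (forall a Y Y', subset Y' Y -> H1 a Y -> H1 a Y') ->
  (forall a Y Y', subset Y' Y -> H2 a Y -> H2 a Y') ->
  (forall a X, infinite X -> exists Y, infinite Y /\ subset Y (above X a) /\ (H1 a Y \/ H2 a Y)) ->
  forall X, infinite X -> exists Y, infinite Y /\ subset Y X /\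
    ((forall a, Y a -> H1 a (above Y a)) \/ (forall a, Y a -> H2 a (above Y a))).
Proof.
  intros Hanti1 Hanti2 Hstep X HX.
  destruct (dependent_choice (fun _ (p : nat * (nat -> Prop)) => infinite (snd p))
     (fun _ p q => snd p (fst q) /\ subset (snd q) (above (snd p) (fst q)) /\
                   (H1 (fst q) (snd q) \/ H2 (fst q) (snd q))))
     with (x0 := (0, X)) as [f [Hf0 Hf]]; [| exact HX |].
  { intros n [? Z] HZ. destruct (HZ 0) as [a [_ Za]].
    destruct (Hstep a Z HZ) as [Y [HY [HYZ Hc]]]. exists (a, Y). simpl. auto. }
  set (a := fun n => fst (f (S n))). set (Z := fun n => snd (f n)).
  assert (Za : forall n, Z n (a n)) by (intro n; destruct (Hf n) as (_ & H & _); exact H).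
  assert (Zstep : forall n, subset (Z (S n)) (above (Z n) (a n)))
    by (intro n; destruct (Hf n) as (_ & _ & H & _); exact H).
  assert (Hcol : forall n, H1 (a n) (Z (S n)) \/ H2 (a n) (Z (S n)))
    by (intro n; destruct (Hf n) as (_ & _ & _ & H); exact H).
  assert (Ha : increasing a) by (intro n; apply (Zstep n), Za).
  assert (Zmono : forall n m, n <= m -> subset (Z m) (Z n)).
  { intros n m Hnm. induction Hnm as [| m _ IH]; intros y Hy; [exact Hy | apply IH, (Zstep m), Hy]. }
  destruct (infinite_pigeonhole (fun n => H1 (a n) (Z (S n))) infinite_all)
    as [I [HI [_ HIcol]]].
  set (Y := fun y => exists n, I n /\ a n = y).
  assert (Yabove : forall n, subset (above Y (a n)) (Z (S n))).
  { intros n y [[m [_ <-]] Hlt]. rewrite (increasing_lt_iff a Ha) in Hlt.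
    apply (Zmono (S n) m); [lia | apply Za]. }
  exists Y. split; [| split].
  - intro N. destruct (HI N) as [n [Hn In]]. exists (a n).
    split; [pose proof (increasing_ge_id a Ha n); lia | exists n; auto].
  - intros y [n [_ <-]]. replace X with (Z 0) by (unfold Z; rewrite Hf0; reflexivity).
    apply (Zmono 0 n); [lia | apply Za].
  - destruct HIcol as [Hall | Hnone]; [left | right]; intros y [n [In <-]].
    + apply (Hanti1 _ _ _ (Yabove n)), Hall, In.
    + apply (Hanti2 _ _ _ (Yabove n)).
      destruct (Hcol n) as [H | H]; [contradiction (Hnone n In) | exact H].
Qed.

Lemma ramsey_pairs (c : nat -> nat -> Prop) {X : nat -> Prop} :
  infinite X -> exists Y, infinite Y /\ subset Y X /\
    ((forall i j, Y i -> Y j -> i < j -> c i j) \/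
     (forall i j, Y i -> Y j -> i < j -> ~ c i j)).
Proof.
  intro HX.
  destruct (infinite_diagonal (fun a Y => forall y, Y y -> c a y)
                              (fun a Y => forall y, Y y -> ~ c a y))
    with (X := X) as [Y [HY [HYX Hcol]]]; [firstorder | firstorder | | exact HX |].
  - intros a Z HZ. destruct (infinite_pigeonhole (c a) (infinite_above a HZ)) as [Y HY]. eauto.
  - exists Y. split; [exact HY |]. split; [exact HYX |].
    destruct Hcol as [H | H]; [left | right]; intros i j Yi Yj Hij; apply (H i Yi); split; assumption.
Qed.

Lemma ramsey_triples (c : nat -> nat -> nat -> Prop) {X : nat -> Prop} :
  infinite X -> exists Y, infinite Y /\ subset Y X /\
    ((forall i j k, Y i -> Y j -> Y k -> i < j -> j < k -> c i j k) \/
     (forall i j k, Y i -> Y j -> Y k -> i < j -> j < k -> ~ c i j k)).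
Proof.
  intro HX.
  destruct (infinite_diagonal (fun a Y => forall j k, Y j -> Y k -> j < k -> c a j k)
                              (fun a Y => forall j k, Y j -> Y k -> j < k -> ~ c a j k))
    with (X := X) as [Y [HY [HYX Hcol]]]; [firstorder | firstorder | | exact HX |].
  - intros a Z HZ. destruct (ramsey_pairs (c a) (infinite_above a HZ)) as [Y HY]. eauto.
  - exists Y. split; [exact HY |]. split; [exact HYX |].
    destruct Hcol as [H | H]; [left | right]; intros i j k Yi Yj Yk Hij Hjk;
      apply (H i Yi); (split; [assumption | lia]) || assumption.
Qed.

Definition good {A : Type} (le : A -> A -> Prop) : Prop :=
  forall x : nat -> A, exists i j, i < j /\ le (x i) (x j).

Lemma good_of_wf_no_antichain {A : Type} {le : A -> A -> Prop} :
  wf_order le -> no_infinite_antichain le -> good le.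
Proof.
  intros Hwf Hna x. apply NNPP. intro Hbad.
  destruct (ramsey_pairs (fun i j => le (x i) (x j)) infinite_all) as [Y [HY [_ [Hup | Hnup]]]].
  { destruct (HY 0) as [i [_ Yi]]. destruct (HY (S i)) as [j [Hij Yj]].
    apply Hbad. exists i, j. split; [lia | apply Hup; auto; lia]. }
  destruct (ramsey_pairs (fun i j => le (x j) (x i)) HY) as [Y' [HY' [HY'Y Hcol]]].
  destruct (infinite_enum HY') as [h [Hh Y'h]].
  destruct Hcol as [Hdown | Hndown].
  - apply (proj1 (well_founded_no_descending_chain _) Hwf (fun n => x (h n))). intro n.
    split; [apply Hdown | apply Hnup]; auto.
  - apply Hna. exists (fun n => x (h n)). intros i j Hij.
    destruct (Nat.lt_gt_cases i j) as [[Hlt | Hlt] _]; [exact Hij | |];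
      pose proof (increasing_lt h Hh _ _ Hlt).
    + apply Hnup; auto.
    + apply Hndown; auto.
Qed.

(** * Embedding Rado's structure into a wqo with an infinite antichain of ideals *)

Section RadoEmbedding.
Context {A : Type}.
Context {le : A -> A -> Prop}.
Hypothesis Hrefl : forall x, le x x.
Hypothesis Htrans : forall x y z, le x y -> le y z -> le x z.
Hypothesis Hgood : good le.

Lemma chain_mono (c : nat -> A) :
  (forall n, le (c n) (c (S n))) -> forall n n', n <= n' -> le (c n) (c n').
Proof.
  intros Hc n n' Hnn'. induction Hnn' as [| n' _ IH]; [apply Hrefl | exact (Htrans _ _ _ IH (Hc n'))].
Qed.

Lemma rado_embeds_intro (E : nat * nat -> A) :
  (forall p q, fst p < snd p -> fst q < snd q -> (le (E p) (E q) <-> rado_le p q)) ->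
  rado_embeds le.
Proof.
  intro HE. exists E. split; [| exact HE].
  intros [a b] [a' b'] Hp Hq Heq.
  assert (H1 : rado_le (a, b) (a', b')) by (apply HE; auto; rewrite Heq; apply Hrefl).
  assert (H2 : rado_le (a', b') (a, b)) by (apply HE; auto; rewrite Heq; apply Hrefl).
  unfold rado_le in *; simpl in *. f_equal; lia.
Qed.

Section Chains.
Variable e : nat -> nat -> A.
Hypothesis e_mono : forall m n n', n <= n' -> le (e m n) (e m n').
Hypothesis e_strict : forall m n, ~ le (e m (S n)) (e m n).
Hypothesis e_sep : forall m k n l, k <= n -> k <> m -> ~ le (e m n) (e k l).

(* If a triple coloured "no" were homogeneous on an infinite set enumerated by [h],
   the sequence [t |-> e (h (2t)) (h (2t+1))] would be bad. *)
Lemma chains_triple_homogeneous : exists Y, infinite Y /\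
  forall i j k, Y i -> Y j -> Y k -> i < j -> j < k -> exists l, le (e i j) (e k l).
Proof.
  destruct (ramsey_triples (fun i j k => exists l, le (e i j) (e k l)) infinite_all)
    as [Y [HY [_ [Hhom | Hnone]]]]; [eauto |].
  exfalso. destruct (infinite_enum HY) as [h [Hh Yh]].
  destruct (Hgood (fun t => e (h (2 * t)) (h (2 * t + 1)))) as [t [t' [Htt' Hle]]].
  apply (Hnone (h (2 * t)) (h (2 * t + 1)) (h (2 * t'))); auto;
    [apply increasing_lt; auto; lia | apply increasing_lt; auto; lia |].
  exists (h (2 * t' + 1)). exact Hle.
Qed.

Lemma chains_witness_bound (Y : nat -> Prop) :
  (forall i j k, Y i -> Y j -> Y k -> i < j -> j < k -> exists l, le (e i j) (e k l)) ->
  forall k, Y k -> exists B, forall i j, Y i -> Y j -> i < j -> j < k -> le (e i j) (e k B).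
Proof.
  intros Hhom k Yk.
  destruct (upward_closed_common_bound (fun i B => forall j, Y i -> Y j -> i < j -> j < k -> le (e i j) (e k B)) k)
    as [B HB].
  - intros i l l' Hll' H j Yi Yj Hij Hjk. exact (Htrans _ _ _ (H j Yi Yj Hij Hjk) (e_mono k _ _ Hll')).
  - intros i Hik.
    destruct (upward_closed_common_bound (fun j B => Y i -> Y j -> i < j -> j < k -> le (e i j) (e k B)) k)
      as [B HB].
    + intros j l l' Hll' H Yi Yj Hij Hjk. exact (Htrans _ _ _ (H Yi Yj Hij Hjk) (e_mono k _ _ Hll')).
    + intros j Hjk. destruct (classic (Y i /\ Y j /\ i < j)) as [(Yi & Yj & Hij) | Hn].
      * destruct (Hhom i j k Yi Yj Yk Hij Hjk) as [l Hl]. exists l. auto.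
      * exists 0. intros Yi Yj Hij. tauto.
    + exists B. intros j Yi Yj Hij Hjk. exact (HB j Hjk Yi Yj Hij Hjk).
  - exists B. intros i j Yi Yj Hij Hjk. apply HB; auto; lia.
Qed.

Lemma chains_rado_iff (g : nat -> nat) :
  increasing g ->
  (forall i j n, i < j -> j < n -> le (e (g i) (g j)) (e (g n) (g (S n)))) ->
  forall a b a' b', a < b -> a' < b' ->
    (le (e (g a) (g b)) (e (g a') (g b')) <-> rado_le (a, b) (a', b')).
Proof.
  intros Hg Hthin a b a' b' Hab Ha'b'. unfold rado_le; simpl. split.
  - intro Hle. destruct (Nat.lt_ge_cases b a') as [Hba' | Ha'b]; [right; exact Hba' | left].
    destruct (Nat.eq_dec a a') as [<- | Hne].
    + split; [reflexivity |]. destruct (Nat.le_gt_cases b b') as [| Hb'b]; [assumption | exfalso].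
      pose proof (increasing_lt g Hg _ _ Hb'b).
      apply (e_strict (g a) (g b')), (Htrans _ _ _ (e_mono (g a) (S (g b')) (g b) ltac:(lia)) Hle).
    + exfalso. apply (e_sep (g a) (g a') (g b) (g b')); [| | exact Hle].
      * apply (increasing_le_iff g Hg). exact Ha'b.
      * intro Heq. apply Hne, (increasing_inj g Hg). auto.
  - intros [[<- Hbb'] | Hba'].
    + apply e_mono, (increasing_le_iff g Hg), Hbb'.
    + apply (Htrans _ _ _ (Hthin a b a' Hab Hba')), e_mono, (increasing_le_iff g Hg). lia.
Qed.

Lemma rado_embeds_of_chains : rado_embeds le.
Proof.
  destruct chains_triple_homogeneous as [Y [HY Hhom]].
  destruct (HY 0) as [y0 [_ Yy0]].
  destruct (dependent_choice (fun _ => Y) (fun _ x y => x < y /\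
              forall i j, Y i -> Y j -> i < j -> j < x -> le (e i j) (e x y)))
    with (x0 := y0) as [g [_ Hg]]; [| exact Yy0 |].
  { intros ? x Yx. destruct (chains_witness_bound Y Hhom x Yx) as [B HB].
    destruct (HY (max B (S x))) as [y [Hy Yy]]. exists y. split; [exact Yy | split; [lia |]].
    intros i j Yi Yj Hij Hjx. apply (Htrans _ _ _ (HB i j Yi Yj Hij Hjx)), e_mono. lia. }
  assert (Hginc : increasing g) by (intro n; apply Hg).
  apply (rado_embeds_intro (fun p => e (g (fst p)) (g (snd p)))).
  intros [a b] [a' b'] Hab Ha'b'. simpl in *. apply (chains_rado_iff g Hginc); [| exact Hab | exact Ha'b'].
  intros i j n Hij Hjn. apply Hg; [apply Hg | apply Hg | apply increasing_lt ..]; auto.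
Qed.

End Chains.

Definition principal (I : A -> Prop) : Prop := exists a, I a /\ forall x, I x -> le x a.

Definition set_antichain (J : nat -> A -> Prop) : Prop :=
  forall i j, i <> j -> exists x, J i x /\ ~ J j x.

Section IdealAntichain.
Variable J : nat -> A -> Prop.
Hypothesis J_ideal : forall i, is_ideal le (J i).
Hypothesis J_antichain : set_antichain J.

Lemma principal_ideals_comparable :
  (forall i, principal (J i)) -> exists i j, i < j /\ subset (J i) (J j).
Proof.
  intro Hp. destruct (choice _ Hp) as [a Ha].
  destruct (Hgood a) as [i [j [Hij Hle]]]. exists i, j. split; [exact Hij |].
  intros x Jx. destruct (J_ideal j) as (_ & Jdown & _).
  exact (Jdown x (a j) (Htrans _ _ _ (proj2 (Ha i) x Jx) Hle) (proj1 (Ha j))).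
Qed.

Lemma ideal_point_outside (m k : nat) : exists w, J m w /\ (k <> m -> ~ J k w).
Proof.
  destruct (Nat.eq_dec k m) as [-> | Hkm].
  - destruct (J_ideal m) as [[w Jw] _]. exists w. tauto.
  - destruct (J_antichain m k (not_eq_sym Hkm)) as [w Hw]. exists w. tauto.
Qed.

Lemma nonprincipal_chain (m : nat) : ~ principal (J m) ->
  exists c : nat -> A, forall n,
    (J m (c n) /\ (n <> m -> ~ J n (c n))) /\ (le (c n) (c (S n)) /\ ~ le (c (S n)) (c n)).
Proof.
  intro Hnp. destruct (ideal_point_outside m 0) as [x0 Hx0].
  destruct (dependent_choice (fun n x => J m x /\ (n <> m -> ~ J n x))
                             (fun _ x y => le x y /\ ~ le y x)) with (x0 := x0)
    as [c [_ Hc]]; [| exact Hx0 | exists c; exact Hc].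
  intros n x [Jx _].
  assert (Hz : exists z, J m z /\ ~ le z x).
  { apply NNPP. intro Hn. apply Hnp. exists x. split; [exact Jx |].
    intros z Jz. apply NNPP. intro Hzx. apply Hn. eauto. }
  destruct Hz as [z [Jz Hzx]]. destruct (ideal_point_outside m (S n)) as [w [Jw Hw]].
  destruct (J_ideal m) as (_ & _ & Jdir).
  destruct (Jdir x z Jx Jz) as [u (Ju & Hxu & Hzu)].
  destruct (Jdir u w Ju Jw) as [y (Jy & Huy & Hwy)].
  exists y. split; [split; [exact Jy |] | split].
  - intros Hne JSy. apply (Hw Hne). exact (proj1 (proj2 (J_ideal (S n))) w y Hwy JSy).
  - exact (Htrans _ _ _ Hxu Huy).
  - intro Hyx. apply Hzx. exact (Htrans _ _ _ (Htrans _ _ _ Hzu Huy) Hyx).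
Qed.

Lemma rado_embeds_of_nonprincipal : (forall m, ~ principal (J m)) -> rado_embeds le.
Proof.
  intro Hnp. destruct (choice _ (fun m => nonprincipal_chain m (Hnp m))) as [e He].
  assert (e_mono : forall m n n', n <= n' -> le (e m n) (e m n'))
    by (intro m; apply chain_mono; intro n; apply He).
  apply (rado_embeds_of_chains e e_mono); [intros m n; apply He |].
  intros m k n l Hkn Hkm Hle. destruct (J_ideal k) as (_ & Jdown & _).
  apply (proj2 (proj1 (He m k)) Hkm).
  apply (Jdown _ _ (e_mono m k n Hkn)), (Jdown _ _ Hle), He.
Qed.

End IdealAntichain.

Lemma rado_embeds_of_ideal_antichain (J : nat -> A -> Prop) :
  (forall i, is_ideal le (J i)) -> set_antichain J -> rado_embeds le.
Proof.
  intros HJ Hanti.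
  destruct (infinite_pigeonhole (fun i => principal (J i)) infinite_all) as [Y [HY [_ Hcol]]].
  destruct (infinite_enum HY) as [h [Hh Yh]].
  assert (Hanti' : set_antichain (fun k => J (h k)))
    by (intros i j Hij; apply Hanti; intro Heq; apply Hij, (increasing_inj h Hh), Heq).
  destruct Hcol as [Hp | Hnp].
  - destruct (principal_ideals_comparable (fun k => J (h k))) as [i [j [Hij Hsub]]]; auto.
    destruct (Hanti' i j) as [x [Jx Hnx]]; [lia |]. contradiction (Hnx (Hsub x Jx)).
  - apply (rado_embeds_of_nonprincipal (fun k => J (h k))); auto.
Qed.

End RadoEmbedding.

(** * The ideal completion *)

Section IdealCompletion.
Context {A : Type}.
Context {le : A -> A -> Prop}.

Local Notation ile := (@Idl_le A le).

Lemma Idl_ext (C D : Idl le) : (forall x, proj1_sig C x <-> proj1_sig D x) -> C = D.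
Proof.
  destruct C as [C HC], D as [D HD]. simpl. intro HCD.
  assert (C = D) as <- by (extensionality x; apply propositional_extensionality, HCD).
  f_equal. apply proof_irrelevance.
Qed.

Lemma Idl_partial_order : partial_order ile.
Proof.
  split; [| split].
  - intros C x Cx. exact Cx.
  - intros C D E HCD HDE x Cx. exact (HDE x (HCD x Cx)).
  - intros C D HCD HDC. apply Idl_ext. split; auto.
Qed.

Lemma union_is_ideal {D : Idl le -> Prop} :
  directed ile D -> is_ideal le (fun x => exists d, D d /\ proj1_sig d x).
Proof.
  intros [[d0 Dd0] Hdir]. split; [| split].
  - destruct (proj2_sig d0) as [[x Hx] _]. exists x, d0. auto.
  - intros x y Hxy [d [Dd Hy]]. exists d. split; [exact Dd |].
    destruct (proj2_sig d) as (_ & Hdown & _). eauto.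
  - intros x y [d1 [Dd1 Hx]] [d2 [Dd2 Hy]].
    destruct (Hdir d1 d2 Dd1 Dd2) as [d3 (Dd3 & H13 & H23)].
    destruct (proj2_sig d3) as (_ & _ & Hd3).
    destruct (Hd3 x y (H13 x Hx) (H23 y Hy)) as [z (Hz & Hxz & Hyz)].
    exists z. split; [exists d3; auto | auto].
Qed.

Definition Idl_union {D : Idl le -> Prop} (HD : directed ile D) : Idl le :=
  exist _ _ (union_is_ideal HD).

Lemma Idl_union_lub {D : Idl le -> Prop} (HD : directed ile D) : is_lub ile D (Idl_union HD).
Proof.
  split.
  - intros d Dd x Hx. exists d. auto.
  - intros u Hu x [d [Dd Hx]]. exact (Hu d Dd x Hx).
Qed.

Lemma Idl_lub_elim {D : Idl le -> Prop} {s : Idl le} :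
  directed ile D -> is_lub ile D s ->
  forall x, proj1_sig s x -> exists d, D d /\ proj1_sig d x.
Proof.
  intros HD [_ Hleast] x Hx. exact (Hleast (Idl_union HD) (proj1 (Idl_union_lub HD)) x Hx).
Qed.

Lemma Idl_dcpo : dcpo ile.
Proof.
  split; [exact Idl_partial_order |].
  intros D HD. exists (Idl_union HD). apply Idl_union_lub.
Qed.

Hypothesis Hrefl : forall x, le x x.
Hypothesis Htrans : forall x y z, le x y -> le y z -> le x z.

Lemma down_is_ideal (a : A) : is_ideal le (fun x => le x a).
Proof.
  split; [| split].
  - exists a. apply Hrefl.
  - intros x y Hxy Hya. exact (Htrans _ _ _ Hxy Hya).
  - intros x y Hxa Hya. exists a. auto.
Qed.

Definition Idl_down (a : A) : Idl le := exist _ _ (down_is_ideal a).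

Definition principal_below (X : Idl le) : Idl le -> Prop :=
  fun P => exists a, proj1_sig X a /\ P = Idl_down a.

Lemma principal_below_directed (X : Idl le) : directed ile (principal_below X).
Proof.
  destruct (proj2_sig X) as ([a Xa] & _ & Xdir). split.
  - exists (Idl_down a). exists a. auto.
  - intros P1 P2 [a1 [Xa1 ->]] [a2 [Xa2 ->]].
    destruct (Xdir a1 a2 Xa1 Xa2) as [a3 (Xa3 & H13 & H23)].
    exists (Idl_down a3). split; [exists a3; auto |].
    split; intros x Hx; simpl in *; eauto.
Qed.

Lemma principal_below_lub (X : Idl le) : is_lub ile (principal_below X) X.
Proof.
  destruct (proj2_sig X) as (_ & Xdown & _). split.
  - intros P [a [Xa ->]] x Hx. exact (Xdown x a Hx Xa).
  - intros u Hu x Xx. exact (Hu (Idl_down x) (ex_intro _ x (conj Xx eq_refl)) x (Hrefl x)).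
Qed.

Lemma way_below_Idl_iff (Y X : Idl le) :
  way_below ile Y X <-> exists a, proj1_sig X a /\ forall y, proj1_sig Y y -> le y a.
Proof.
  split.
  - intro Hwb.
    destruct (Hwb _ X (principal_below_directed X) (principal_below_lub X) (fun x Xx => Xx))
      as [P [[a [Xa ->]] HYa]].
    exists a. split; [exact Xa |]. intros y Yy. exact (HYa y Yy).
  - intros [a [Xa HYa]] D s HD Hs HXs.
    destruct (Idl_lub_elim HD Hs a (HXs a Xa)) as [d [Dd da]].
    exists d. split; [exact Dd |]. intros y Yy.
    destruct (proj2_sig d) as (_ & ddown & _). exact (ddown y a (HYa y Yy) da).
Qed.

Lemma Idl_continuous_dcpo : continuous_dcpo ile.
Proof.
  split; [exact Idl_dcpo |]. intro X.
  destruct (proj2_sig X) as ([a0 Xa0] & Xdown & Xdir).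
  assert (Hdown_wb : forall a, proj1_sig X a -> way_below ile (Idl_down a) X)
    by (intros a Xa; apply way_below_Idl_iff; exists a; simpl; auto).
  split; [split | split].
  - exists (Idl_down a0). auto.
  - intros Y1 Y2 H1 H2.
    apply way_below_Idl_iff in H1 as [a1 [Xa1 H1]], H2 as [a2 [Xa2 H2]].
    destruct (Xdir a1 a2 Xa1 Xa2) as [a3 (Xa3 & H13 & H23)].
    exists (Idl_down a3). split; [auto |]. split; intros y Hy; simpl; eauto.
  - intros Y HY y Yy. apply way_below_Idl_iff in HY as [a [Xa HYa]]. exact (Xdown y a (HYa y Yy) Xa).
  - intros u Hu x Xx. exact (Hu (Idl_down x) (Hdown_wb x Xx) x (Hrefl x)).
Qed.

Lemma rado_column_is_ideal {E : nat * nat -> A} :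
  (forall p q, fst p < snd p -> fst q < snd q -> (le (E p) (E q) <-> rado_le p q)) ->
  forall m, is_ideal le (fun x => exists n, m < n /\ le x (E (m, n))).
Proof.
  intros HE m.
  assert (Hcol : forall n n', m < n -> n <= n' -> le (E (m, n)) (E (m, n')))
    by (intros n n' Hn Hnn'; apply HE; simpl; [lia | lia | left; auto]).
  split; [| split].
  - exists (E (m, S m)), (S m). split; [lia | apply Hrefl].
  - intros x y Hxy [n [Hn Hy]]. exists n. split; [exact Hn | exact (Htrans _ _ _ Hxy Hy)].
  - intros x y [n1 [Hn1 Hx]] [n2 [Hn2 Hy]]. exists (E (m, max n1 n2)).
    split; [exists (max n1 n2); split; [lia | apply Hrefl] |].
    split; [apply (Htrans _ _ _ Hx) | apply (Htrans _ _ _ Hy)]; apply Hcol; lia.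
Qed.

Lemma Idl_antichain_of_rado : rado_embeds le -> ~ no_infinite_antichain ile.
Proof.
  intros [E [_ HE]] Hna. apply Hna.
  exists (fun m => exist _ _ (rado_column_is_ideal HE m)).
  intros i j Hij Hle.
  destruct (Hle (E (i, S (max i j)))) as [n [Hjn HEn]]; [exists (S (max i j)); split; [lia | apply Hrefl] |].
  apply HE in HEn; simpl; [| lia | lia]. unfold rado_le in HEn; simpl in HEn. lia.
Qed.

Lemma down_image_is_ideal {f : A -> option A} {C : A -> Prop} :
  partial_monotone le f -> is_ideal le C -> (exists x, C x /\ pdom f x) ->
  is_ideal le (down_image le f C).
Proof.
  intros [Hup Hmon] (_ & Cdown & Cdir) [x [Cx fx]]. split; [| split].
  - destruct (f x) as [y |] eqn:Hfx; [| contradiction].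
    exists y, x, y. auto.
  - intros y z Hyz [w [fw (Cw & Hfw & Hz)]]. exists w, fw. split; [exact Cw |].
    split; [exact Hfw | exact (Htrans _ _ _ Hyz Hz)].
  - intros y z [w1 [f1 (Cw1 & Hf1 & Hy)]] [w2 [f2 (Cw2 & Hf2 & Hz)]].
    destruct (Cdir w1 w2 Cw1 Cw2) as [w (Cw & H1 & H2)].
    assert (Hw : pdom f w) by (apply (Hup w1); [exact H1 | unfold pdom; congruence]).
    destruct (f w) as [fw |] eqn:Hfw; [| contradiction].
    exists fw. split; [exists w, fw; auto |].
    split; [exact (Htrans _ _ _ Hy (Hmon _ _ _ _ H1 Hf1 Hfw))
           | exact (Htrans _ _ _ Hz (Hmon _ _ _ _ H2 Hf2 Hfw))].
Qed.

Lemma hat_map_Some {f : A -> option A} {C C' : Idl le} :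
  hat_map f C = Some C' -> proj1_sig C' = down_image le f (proj1_sig C).
Proof.
  unfold hat_map. destruct (excluded_middle_informative _); intro H; inversion H. reflexivity.
Qed.

Lemma pdom_hat_map (f : A -> option A) (C : Idl le) :
  partial_monotone le f -> (pdom (hat_map f) C <-> exists x, proj1_sig C x /\ pdom f x).
Proof.
  intro Hf. unfold pdom at 1, hat_map.
  destruct (excluded_middle_informative _) as [Hi | Hi]; split; try congruence.
  - intros _. destruct Hi as [[y [x [fx (Cx & Hfx & _)]]] _]. exists x. split; [exact Cx | unfold pdom; congruence].
  - intro H. contradiction (Hi (down_image_is_ideal Hf (proj2_sig C) H)).
Qed.

Lemma hat_map_dom_upward_closed {f : A -> option A} :
  partial_monotone le f -> upward_closed ile (pdom (hat_map f)).
Proof.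
  intros Hf C D HCD HC. apply pdom_hat_map in HC as [x [Cx fx]]; [| exact Hf].
  apply pdom_hat_map; [exact Hf |]. exists x. auto.
Qed.

Lemma hat_map_partial_monotone (f : A -> option A) :
  partial_monotone le f -> partial_monotone ile (hat_map f).
Proof.
  intro Hf. split; [exact (hat_map_dom_upward_closed Hf) |].
  intros C D C' D' HCD HC HD y. rewrite (hat_map_Some HC), (hat_map_Some HD).
  intros [x [fx (Cx & Hfx & Hy)]]. exists x, fx. auto.
Qed.

Lemma hat_map_partial_continuous (f : A -> option A) :
  partial_monotone le f -> partial_continuous ile (hat_map f).
Proof.
  intro Hf. split; [split; [exact (hat_map_dom_upward_closed Hf) |] |].
  - intros D s HD Hs Hdom. apply pdom_hat_map in Hdom as [x [sx fx]]; [| exact Hf].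
    destruct (Idl_lub_elim HD Hs x sx) as [d [Dd dx]].
    exists d. split; [exact Dd |]. apply pdom_hat_map; [exact Hf |]. eauto.
  - intros D s HD HDdom Hs.
    assert (Hsdom : pdom (hat_map f) s).
    { destruct (proj1 HD) as [d0 Dd0].
      exact (hat_map_dom_upward_closed Hf d0 s (proj1 Hs d0 Dd0) (HDdom d0 Dd0)). }
    destruct (hat_map f s) as [gs |] eqn:Hgs; [| contradiction (Hsdom Hgs)].
    exists gs. split; [reflexivity | split].
    + intros y [d [Dd Hdy]] z. rewrite (hat_map_Some Hdy), (hat_map_Some Hgs).
      intros [w [fw (dw & Hfw & Hz)]]. exists w, fw. split; [exact (proj1 Hs d Dd w dw) | auto].
    + intros u Hu z. rewrite (hat_map_Some Hgs). intros [w [fw (sw & Hfw & Hz)]].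
      destruct (Idl_lub_elim HD Hs w sw) as [d [Dd dw]].
      destruct (hat_map f d) as [y |] eqn:Hy; [| contradiction (HDdom d Dd Hy)].
      apply (Hu y (ex_intro _ d (conj Dd Hy))). rewrite (hat_map_Some Hy). exists w, fw. auto.
Qed.

Hypothesis Hgood : good le.

Lemma Idl_wf : wf_order ile.
Proof.
  apply well_founded_no_descending_chain. intros f Hf.
  assert (Hx : forall n, exists x, proj1_sig (f n) x /\ ~ proj1_sig (f (S n)) x).
  { intro n. destruct (Hf n) as [_ Hn]. apply not_all_ex_not in Hn as [x Hx].
    exists x. apply imply_to_and, Hx. }
  destruct (choice _ Hx) as [x Hxf].
  assert (Hmono : forall i j, i <= j -> subset (proj1_sig (f j)) (proj1_sig (f i))).
  { intros i j Hij. induction Hij as [| j _ IH]; intros y Hy; [exact Hy | apply IH, (Hf j), Hy]. }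
  destruct (Hgood x) as [i [j [Hij Hle]]].
  apply (proj2 (Hxf i)). destruct (proj2_sig (f (S i))) as (_ & Hdown & _).
  apply (Hdown _ _ Hle), (Hmono (S i) j Hij), Hxf.
Qed.

Lemma Idl_no_infinite_antichain : ~ rado_embeds le -> no_infinite_antichain ile.
Proof.
  intros Hnr [a Ha]. apply Hnr.
  apply (rado_embeds_of_ideal_antichain Hrefl Htrans Hgood (fun i => proj1_sig (a i))).
  - intro i. apply proj2_sig.
  - intros i j Hij. destruct (not_all_ex_not _ _ (Ha i j Hij)) as [x Hx].
    exists x. apply imply_to_and, Hx.
Qed.

Lemma Idl_wpo : ~ rado_embeds le -> wpo ile.
Proof.
  intro Hnr. exact (conj Idl_partial_order (conj Idl_wf (Idl_no_infinite_antichain Hnr))).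
Qed.

End IdealCompletion.

Theorem theorem4p4 (S : Type) (le : S -> S -> Prop) (F : list (S -> option S)) :
  functional_WSTS le F ->
  (complete_functional_WSTS (@Idl_le S le) (hat_maps le F) <-> omega2_wqo le).
Proof.
  intros [[Hpo [Hwf Hna]] HF]. destruct Hpo as (Hrefl & Htrans & _).
  pose proof (good_of_wf_no_antichain Hwf Hna) as Hgood.
  assert (Hhat : forall g, In g (hat_maps le F) ->
            partial_monotone (@Idl_le S le) g /\ partial_continuous (@Idl_le S le) g).
  { intros g Hg. apply in_map_iff in Hg as [f [<- Hf]].
    split; [apply hat_map_partial_monotone | apply hat_map_partial_continuous]; auto. }
  split.
  - intros [[[_ [_ HnaI]] _] _]. split; [exact (conj Hrefl (conj Htrans (conj Hwf Hna))) |].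
    intro Hr. exact (Idl_antichain_of_rado Hrefl Htrans Hr HnaI).
  - intros [_ Hnr]. split; [split | split].
    + exact (Idl_wpo Hrefl Htrans Hgood Hnr).
    + intros g Hg. apply Hhat, Hg.
    + exact (Idl_continuous_dcpo Hrefl Htrans).
    + intros g Hg. apply Hhat, Hg.
Qed.
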